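(* Let $n\ge 3$ and $a,c>0$. Let $\Gamma'$ be the wheel on $n+1$ vertices: vertices $1,\dots,n$ form a cycle ($i$ joined to $i+1$, indices modulo $n$) with all conductances $c$, and vertex $n+1$ is joined to every vertex $1,\dots,n$ with conductance $a$. Put $q=\frac{a}{2c}+1$. Then $$K(\Gamma')=-\frac{1}{2c}\,\frac{n+1}{T_n(q)-1}\left[\left(\frac{an}{6c}-n+1\right)U_{n-1}(q)+\left(\frac{2c}{a}+\frac{n}{3}\right)\bigl(V_{n-1}(q)-1\bigr)\right]+\frac{1}{a}+\frac{n(n+1)}{6c}.$$
   Context: For a network with vertex set $\{1,\dots,N\}$ and conductances $c_{ij}>0$ on its edges, the Laplacian is the matrix $L$ with $L_{ii}=\sum_k c_{ik}$, $L_{ij}=-c_{ij}$ ($i\neq j$, $c_{ij}=0$ for non-edges). With $G'$ the group inverse of the Laplacian of $\Gamma'$, the effective resistance is $R(i,j)=G'_{ii}+G'_{jj}-2G'_{ij}$ and the Kirchhoff index is $K(\Gamma')=\frac12\sum_{i,j}R(i,j)$. $T_k,U_k$ are the Chebyshev polynomials of the first and second kind ($T_0=1,T_1=x,U_0=1,U_1=2x$, recurrence $p_{k+1}=2xp_k-p_{k-1}$) and $V_k$ those of the third kind ($V_0=1$, $V_1=2x-1$, $V_{k+1}=2xV_k-V_{k-1}$). *)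

From HB Require Import structures.
From mathcomp Require Import all_boot all_order all_algebra.
Set Implicit Arguments. Unset Strict Implicit. Unset Printing Implicit Defensive.
Import Order.TTheory GRing.Theory Num.Theory.
Local Open Scope ring_scope.

(* Laplacian of a network on vertex set 'I_N with conductance function cond
   (cond i j > 0 on edges, 0 on non-edges, cond i i = 0). *)
Definition laplacian (R : ringType) (N : nat) (cond : 'I_N -> 'I_N -> R) : 'M[R]_N :=
  \matrix_(i, j) (if i == j then \sum_k cond i k else - cond i j).

Definition is_group_inverse (R : ringType) (N : nat) (L G : 'M[R]_N) : Prop :=
  [/\ L *m G *m L = L, G *m L *m G = G & L *m G = G *m L].

Definition eff_res (R : ringType) (N : nat) (G : 'M[R]_N) (i j : 'I_N) : R :=
  G i i + G j j - 2 * G i j.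

Definition kirchhoff (R : fieldType) (N : nat) (G : 'M[R]_N) : R :=
  2^-1 * \sum_i \sum_j eff_res G i j.

(* Wheel on n+1 vertices: vertices 0..n-1 (paper's 1..n) form a cycle with
   conductance c; vertex n (paper's n+1) is the hub, joined to all others
   with conductance a. *)
Definition wheel_cond (R : ringType) (n : nat) (a c : R) (i j : 'I_n.+1) : R :=
  if i == j then 0
  else if (nat_of_ord i == n) || (nat_of_ord j == n) then a
  else if ((i.+1 %% n)%N == j) || ((j.+1 %% n)%N == i) then c
  else 0.

Fixpoint cheb_rec (R : ringType) (x p0 p1 : R) (k : nat) : R :=
  match k with
  | 0 => p0
  | 1 => p1
  | S (S k' as k1) => 2 * x * cheb_rec x p0 p1 k1 - cheb_rec x p0 p1 k'
  end.

Definition chebT (R : ringType) (k : nat) (x : R) : R := cheb_rec x 1 x k.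
Definition chebU (R : ringType) (k : nat) (x : R) : R := cheb_rec x 1 (2 * x) k.
Definition chebV (R : ringType) (k : nat) (x : R) : R := cheb_rec x 1 (2 * x - 1) k.

From HB Require Import structures.
From mathcomp Require Import all_boot all_order all_algebra.
From mathcomp Require Import ring lra zify.
Set Implicit Arguments. Unset Strict Implicit. Unset Printing Implicit Defensive.
Import Order.TTheory GRing.Theory Num.Theory.
Local Open Scope ring_scope.

(* The group inverse of the wheel Laplacian is explicit.  With q = a/(2c) + 1,
   let g(k) = (U_(n-k-1)(q) + U_(k-1)(q)) / (2c (T_n(q) - 1)); it solves the
   Green equation 2q g(k) - g(k-1) - g(k+1) = [k = 0] / c on Z/nZ.  Taking
   g(cyclic distance) minus a constant on the rim and suitable constants on the
   hub row and column gives a symmetric H with L H = I - J/(n+1) (for the hub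
   row because columns of both sides sum to zero), hence H is the group
   inverse, which is unique.  As H has zero row sums, K = (n+1) tr H, and tr H
   only involves g(0) = U_(n-1)(q) / (2c (T_n(q) - 1)). *)

Section Chebyshev.
Variable R : comNzRingType.

Lemma cheb_recSS (x p0 p1 : R) k :
  cheb_rec x p0 p1 k.+2 = 2 * x * cheb_rec x p0 p1 k.+1 - cheb_rec x p0 p1 k.
Proof. by []. Qed.

Lemma eq_cheb_rec (x : R) (f h : nat -> R) :
  (forall k, f k.+2 = 2 * x * f k.+1 - f k) ->
  (forall k, h k.+2 = 2 * x * h k.+1 - h k) ->
  f 0%N = h 0%N -> f 1%N = h 1%N -> forall k, f k = h k.
Proof.
move=> recf rech f0 f1 k; suff [] : f k = h k /\ f k.+1 = h k.+1 by [].
by elim: k => [|k [IHk IHk1]] //; rewrite recf rech IHk IHk1.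
Qed.

(* [chebW q k = U_(k-1)(q)], with the convention [U_(-1) = 0]. *)
Definition chebW (q : R) k := cheb_rec q 0 1 k.

Lemma chebW_rec (q : R) m : (0 < m)%N ->
  chebW q m.+1 + chebW q m.-1 = 2 * q * chebW q m.
Proof. by case: m => // m _; rewrite /chebW cheb_recSS; ring. Qed.

Ltac solve_cheb := by move=> *; rewrite /chebW /chebU /chebV /chebT ?cheb_recSS /=; ring.

Lemma chebU_W (q : R) k : chebU k q = chebW q k.+1.
Proof. by apply: (@eq_cheb_rec q (fun k => chebU k q) (fun k => chebW q k.+1)); solve_cheb. Qed.

Lemma chebV_W (q : R) k : chebV k q = chebW q k.+1 - chebW q k.
Proof.
by apply: (@eq_cheb_rec q (fun k => chebV k q) (fun k => chebW q k.+1 - chebW q k));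
  solve_cheb.
Qed.

Lemma chebT_W (q : R) k : chebT k.+1 q = q * chebW q k.+1 - chebW q k.
Proof.
apply: (@eq_cheb_rec q (fun k => chebT k.+1 q)
  (fun k => q * chebW q k.+1 - chebW q k)); solve_cheb.
Qed.

End Chebyshev.

Section ChebyshevOrder.
Variable R : realFieldType.

Lemma chebW_incr (q : R) k : 1 < q ->
  0 <= chebW q k /\ 1 <= chebW q k.+1 - chebW q k.
Proof.
move=> q_gt1; elim: k => [|k [W_ge0 dW_ge1]]; first by rewrite /chebW /=; lra.
have : 0 <= (q - 1) * chebW q k.+1 by rewrite mulr_ge0 //; lra.
rewrite [chebW q k.+2]cheb_recSS -/(chebW q k.+1) -/(chebW q k).
split; nra.
Qed.

Lemma chebT_gt1 (q : R) n : 1 < q -> (0 < n)%N -> 1 < chebT n q.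
Proof.
case: n => // n q_gt1 _; rewrite chebT_W.
have [W_ge0 dW_ge1] := chebW_incr n q_gt1.
have : 0 <= (q - 1) * chebW q n.+1 by rewrite mulr_ge0 //; lra.
nra.
Qed.

End ChebyshevOrder.

Section Laplacian.
Variables (R : comNzRingType) (N : nat) (cond : 'I_N -> 'I_N -> R).
Hypotheses (cond_diag : forall i, cond i i = 0) (cond_sym : forall i j, cond i j = cond j i).

Lemma laplacian_mulmxE (H : 'M[R]_N) i j :
  (laplacian cond *m H) i j = \sum_k cond i k * (H i j - H k j).
Proof.
rewrite !mxE (bigD1 i) //= mxE eqxx [RHS](bigD1 i) //= cond_diag mul0r add0r.
rewrite [\sum_k cond i k](bigD1 i) //= cond_diag add0r big_distrl -big_split /=.
by apply: eq_bigr => k ki; rewrite mxE eq_sym (negbTE ki); ring.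
Qed.

Lemma sum_col_laplacian k : \sum_i laplacian cond i k = 0.
Proof.
rewrite (bigD1 k) //= mxE eqxx [X in X + _](bigD1 k) //= cond_diag add0r.
rewrite -big_split big1 //= => i ik.
by rewrite mxE (negbTE ik) cond_sym subrr.
Qed.

Lemma trmx_laplacian : (laplacian cond)^T = laplacian cond.
Proof.
apply/matrixP => i j; rewrite !mxE eq_sym.
by case: eqP => [->|_] //; rewrite cond_sym.
Qed.

Lemma sum_col_laplacian_mulmx (H : 'M[R]_N) j : \sum_i (laplacian cond *m H) i j = 0.
Proof.
under eq_bigr do rewrite mxE.
by rewrite exchange_big big1 // => k _; rewrite -mulr_suml sum_col_laplacian mul0r.
Qed.

End Laplacian.

Lemma eq_row_max (V : zmodType) n m (X Y : 'M[V]_(n.+1, m)) j :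
  \sum_i X i j = \sum_i Y i j ->
  (forall i : 'I_n, X (widen_ord (leqnSn n) i) j = Y (widen_ord (leqnSn n) i) j) ->
  X ord_max j = Y ord_max j.
Proof.
rewrite !big_ord_recr /= => sumXY eqXY; move: sumXY.
by under eq_bigr do rewrite eqXY; apply: addrI.
Qed.

Definition centering (R : fieldType) N : 'M[R]_N :=
  \matrix_(i, j) ((i == j)%:R - (N%:R)^-1).

Lemma trmx_centering (R : fieldType) N : (centering R N)^T = centering R N.
Proof. by apply/matrixP => i j; rewrite !mxE eq_sym. Qed.

Lemma sum_col_centering (R : numFieldType) N j : \sum_i centering R N.+1 i j = 0.
Proof.
under eq_bigr do rewrite mxE.
rewrite sumrB sumr_const card_ord (bigD1 j) //= eqxx big1 => [|i /negbTE -> //].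
by rewrite addr0 -[_^-1 *+ _]mulr_natl mulfV ?subrr // pnatr_eq0.
Qed.

Lemma centering_mulmx (R : fieldType) N (X : 'M[R]_N) :
  (forall j, \sum_k X k j = 0) -> centering R N *m X = X.
Proof.
move=> sumX0; apply/matrixP => i j; rewrite mxE.
under eq_bigr do rewrite mxE mulrBl.
rewrite sumrB -mulr_sumr sumX0 mulr0 subr0 (bigD1 i) //= eqxx mul1r big1 ?addr0 //.
by move=> k ki; rewrite eq_sym (negbTE ki) mul0r.
Qed.

Lemma group_inverse_uniq (R : pzSemiRingType) (L G1 G2 : R) :
  L * G1 * L = L -> G1 * L * G1 = G1 -> L * G1 = G1 * L ->
  L * G2 * L = L -> G2 * L * G2 = G2 -> L * G2 = G2 * L -> G1 = G2.
Proof.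
move=> LGL1 GLG1 comm1 LGL2 GLG2 comm2.
have LG1E : L * G1 = L * G2 * (L * G1) by rewrite mulrA LGL2.
have LG2E : L * G2 = L * G2 * (L * G1).
  by rewrite [X in _ = _ * X]comm1 comm2 -{1}LGL1 !mulrA.
have LG12 : L * G1 = L * G2 by rewrite LG1E -LG2E.
by rewrite -GLG1 -comm1 LG12 comm2 -mulrA LG12 mulrA GLG2.
Qed.

Lemma kirchhoff_trace (R : numFieldType) N (G : 'M[R]_N) :
  (forall i, \sum_j G i j = 0) -> kirchhoff G = N%:R * \tr G.
Proof.
move=> sum_row0.
have row_sum i : \sum_j eff_res G i j = G i i *+ N + \tr G.
  by rewrite sumrB big_split /= sumr_const card_ord -mulr_sumr sum_row0 mulr0 subr0.
rewrite /kirchhoff (eq_bigr _ (fun i _ => row_sum i)) big_split /= sumr_const card_ord.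
rewrite sumrMnl -/(\tr G) -mulr2n mulr_natl -[X in _ * X]mulr_natl mulrA
   mulVf ?mul1r //.
by rewrite pnatr_eq0.
Qed.

Section CyclicIndices.
Variable n : nat.

Definition cyc_succ i := if i.+1 == n then 0%N else i.+1.
Definition cyc_pred i := if i == 0%N then n.-1 else i.-1.
Definition cyc_dist i j := if (i <= j)%N then (j - i)%N else (j + n - i)%N.

Ltac cyc_lia := rewrite /cyc_succ /cyc_pred /cyc_dist; repeat case: ifP; lia.

Lemma modn_succ i : (i < n)%N -> (i.+1 %% n)%N = cyc_succ i.
Proof.
rewrite /cyc_succ => lt_in; case: eqP => [->|ne]; first by rewrite modnn.
by rewrite modn_small //; lia.
Qed.

Lemma cyc_distnn i : cyc_dist i i = 0%N. Proof. by rewrite /cyc_dist leqnn subnn. Qed.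

Lemma cyc_succ_lt i : (i < n)%N -> (cyc_succ i < n)%N. Proof. cyc_lia. Qed.
Lemma cyc_pred_lt i : (i < n)%N -> (cyc_pred i < n)%N. Proof. cyc_lia. Qed.

Section Dist.
Variables i j : nat.
Hypotheses (lt_in : (i < n)%N) (lt_jn : (j < n)%N).

Lemma cyc_dist_lt : (cyc_dist i j < n)%N. Proof. cyc_lia. Qed.
Lemma cyc_dist_eq0 : (cyc_dist i j == 0%N) = (i == j). Proof. cyc_lia. Qed.
Lemma cyc_dist_succ : cyc_dist (cyc_succ i) j = cyc_pred (cyc_dist i j). Proof. cyc_lia. Qed.
Lemma cyc_dist_pred : cyc_dist (cyc_pred i) j = cyc_succ (cyc_dist i j). Proof. cyc_lia. Qed.
Lemma cyc_distC : cyc_dist j i = if i == j then 0%N else (n - cyc_dist i j)%N.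
Proof. cyc_lia. Qed.

End Dist.
End CyclicIndices.

Section WheelConductance.
Variables (R : nzRingType) (n : nat) (a c : R).

Lemma wheel_cond_diag (i : 'I_n.+1) : wheel_cond a c i i = 0.
Proof. by rewrite /wheel_cond eqxx. Qed.

Lemma wheel_cond_sym (i j : 'I_n.+1) : wheel_cond a c i j = wheel_cond a c j i.
Proof. by rewrite /wheel_cond eq_sym orbC [X in if X then c else 0]orbC. Qed.

Lemma wheel_cond_hub (k : 'I_n.+1) : wheel_cond a c ord_max k = if k == ord_max then 0 else a.
Proof. by rewrite /wheel_cond eq_sym eqxx. Qed.

Lemma sum_wheel_cond (i : 'I_n.+1) (F : 'I_n.+1 -> R) : (3 <= n)%N -> (i < n)%N ->
  \sum_k wheel_cond a c i k * F k =
    a * F ord_max + c * F (inord (cyc_succ n i)) + c * F (inord (cyc_pred n i)).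
Proof.
move=> n_ge3 lt_in; have lt_sn := cyc_succ_lt lt_in; have lt_pn := cyc_pred_lt lt_in.
rewrite (eq_bigr (fun k => (if k == ord_max then a * F k else 0)
    + (if k == inord (cyc_succ n i) then c * F k else 0)
    + (if k == inord (cyc_pred n i) then c * F k else 0))).
  by rewrite !big_split /= -!big_mkcond !big_pred1_eq.
move=> k _; rewrite /wheel_cond -!val_eqE /= !inordK ?ltnS 1?ltnW // modn_succ //.
have [-> | ne_kn] := eqVneq (k : nat) n;
  last rewrite modn_succ; last by have := ltn_ord k; lia.
all: rewrite ?orbT; move: lt_pn lt_sn; rewrite /cyc_succ /cyc_pred.
all: by repeat case: ifP; rewrite ?(mul0r, addr0, add0r) //; lia.
Qed.

End WheelConductance.

Section CycleGreen.
Variables (R : numFieldType) (n : nat) (q c : R).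

Definition cycle_green k :=
  (2 * c * (chebT n q - 1))^-1 * (chebW q (n - k) + chebW q k).

Lemma cycle_green_sym k : (k <= n)%N -> cycle_green (n - k) = cycle_green k.
Proof. by move=> le_kn; rewrite /cycle_green subKn // [chebW q k + _]addrC. Qed.

Lemma cycle_green_rec k : (0 < k < n)%N ->
  cycle_green k.-1 + cycle_green k.+1 = 2 * q * cycle_green k.
Proof.
case/andP=> k_gt0 lt_kn; rewrite /cycle_green mulrCA -mulrDr; congr (_ * _).
have -> : (n - k.-1 = (n - k).+1)%N by lia.
have -> : (n - k.+1 = (n - k).-1)%N by lia.
rewrite mulrDr -(chebW_rec q k_gt0) -(chebW_rec q (_ : 0 < n - k)%N) ?subn_gt0 //; ring.
Qed.

Hypotheses (c_neq0 : c != 0) (chebT_neq1 : chebT n q != 1).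

Lemma cycle_green_eq k : (1 < n)%N -> (k < n)%N ->
  2 * q * cycle_green k - cycle_green (cyc_pred n k) - cycle_green (cyc_succ n k)
    = (k == 0%N)%:R / c.
Proof.
move=> n_gt1 lt_kn; rewrite /cyc_pred /cyc_succ.
have [-> | k_gt0] := posnP k.
  rewrite ifN; last by lia.
  rewrite -subn1 cycle_green_sym; last by lia.
  move: chebT_neq1; rewrite /cycle_green -(ltn_predK n_gt1) chebT_W subn0 subn1 /=.
  have [W0 W1] : chebW q 0 = 0 /\ chebW q 1 = 1 by [].
  rewrite -subr_eq0 W0 W1 => T_neq1; field.
  by rewrite T_neq1 c_neq0.
rewrite -(@cycle_green_rec k) ?k_gt0 // mul0r.
case: eqP => [Sk_n | _]; last by rewrite addrAC addrK subrr.
by rewrite -[cycle_green 0](cycle_green_sym (leq0n n)) subn0 -Sk_n addrAC addrK subrr.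
Qed.

End CycleGreen.

Section WheelGroupInverse.
Variables (R : realFieldType) (n : nat) (a c : R).

Local Notation N := (n.+1%:R : R).
Local Notation q := (a / (2 * c) + 1).
Local Notation g := (cycle_green n q c).
Local Notation L := (laplacian (wheel_cond a c)).

(* The rim shift and the hub constants make every row sum to zero and the rim
   rows of [L *m wheel_ginv] equal to those of [centering R n.+1]. *)
Definition wheel_ginv : 'M[R]_n.+1 := \matrix_(i, j)
  if (i == n :> nat) && (j == n :> nat) then n%:R / (a * N ^+ 2)
  else if (i == n :> nat) || (j == n :> nat) then - (a * N ^+ 2)^-1
  else g (cyc_dist n i j) - ((a * N)^-1 + (a * N ^+ 2)^-1).

Hypotheses (n_ge3 : (3 <= n)%N) (a_gt0 : 0 < a) (c_gt0 : 0 < c).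

Let a_neq0 : a != 0. Proof. exact: lt0r_neq0. Qed.
Let c_neq0 : c != 0. Proof. exact: lt0r_neq0. Qed.
Let N_neq0 : N != 0. Proof. by rewrite pnatr_eq0. Qed.


Lemma chebT_wheel_gt1 : 1 < chebT n q.
Proof. by apply: chebT_gt1; [rewrite ltrDr divr_gt0 // mulr_gt0 | lia]. Qed.

Let chebT_neq1 : chebT n q != 1. Proof. by rewrite gt_eqF // chebT_wheel_gt1. Qed.

Ltac wheel_field := field; by rewrite ?natr1 ?nat1r ?N_neq0 ?a_neq0 ?c_neq0.

Lemma mul_laplacian_wheel_ginv_cycle (i j : 'I_n.+1) : (i < n)%N ->
  (L *m wheel_ginv) i j = centering R n.+1 i j.
Proof.
move=> lt_in; have lt_sn := cyc_succ_lt lt_in; have lt_pn := cyc_pred_lt lt_in.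
rewrite laplacian_mulmxE; last exact: wheel_cond_diag.
rewrite sum_wheel_cond // !mxE /= !inordK ?ltnS 1?ltnW // eqxx.
rewrite (ltn_eqF lt_in) (ltn_eqF lt_sn) (ltn_eqF lt_pn) -val_eqE /=.
have [j_hub | j_cyc] := eqVneq (j : nat) n.
  by rewrite j_hub (ltn_eqF lt_in) -natr1 /=; wheel_field.
have lt_jn : (j < n)%N by rewrite ltn_neqAle j_cyc -ltnS ltn_ord.
have := cycle_green_eq c_neq0 chebT_neq1 (ltnW n_ge3) (cyc_dist_lt lt_in lt_jn).
rewrite -cyc_dist_succ // -cyc_dist_pred // cyc_dist_eq0 //.
set gs := g (cyc_dist n (cyc_succ n i) j) => green_eq.
have -> : gs = 2 * q * g (cyc_dist n i j) - g (cyc_dist n (cyc_pred n i) j) - (i == j)%:R / c.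
  by rewrite -green_eq; ring.
by rewrite -natr1; wheel_field.
Qed.

Lemma mul_laplacian_wheel_ginv : L *m wheel_ginv = centering R n.+1.
Proof.
apply/matrixP => i j; have [lt_in | ge_in] := ltnP i n.
  exact: mul_laplacian_wheel_ginv_cycle.
have -> : i = ord_max by apply: val_inj; apply/eqP; rewrite eqn_leq -ltnS ltn_ord.
apply: eq_row_max => [|k]; last by apply: mul_laplacian_wheel_ginv_cycle; exact: (ltn_ord k).
rewrite sum_col_centering sum_col_laplacian_mulmx //.
  exact: wheel_cond_diag.
exact: wheel_cond_sym.
Qed.

Lemma trmx_wheel_ginv : wheel_ginv^T = wheel_ginv.
Proof.
apply/matrixP => i j; rewrite !mxE andbC orbC.
have [// | ne_in] := eqVneq (i : nat) n; have [// | ne_jn] := eqVneq (j : nat) n => /=.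
have lt_in : (i < n)%N by rewrite ltn_neqAle ne_in -ltnS ltn_ord.
have lt_jn : (j < n)%N by rewrite ltn_neqAle ne_jn -ltnS ltn_ord.
rewrite (cyc_distC lt_in lt_jn); case: eqP => [ij | _].
  by rewrite ij cyc_distnn.
by rewrite cycle_green_sym // ltnW // cyc_dist_lt.
Qed.

Lemma sum_col_wheel_ginv j : \sum_k wheel_ginv k j = 0.
Proof.
move/matrixP/(_ ord_max j): mul_laplacian_wheel_ginv.
rewrite laplacian_mulmxE; last exact: wheel_cond_diag.
under eq_bigr do rewrite wheel_cond_hub.
rewrite (eq_bigr (fun k => a * (wheel_ginv ord_max j - wheel_ginv k j))) => [|k _]; last first.
  by case: eqP => [-> | _]; rewrite ?subrr ?mulr0.
rewrite -mulr_sumr sumrB sumr_const card_ord => hub_eq.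
have -> : \sum_k wheel_ginv k j = wheel_ginv ord_max j *+ n.+1 - centering R n.+1 ord_max j / a.
  by rewrite -hub_eq mulrC mulKf // opprB addrC subrK.
rewrite !mxE /= eqxx -val_eqE /= eq_sym.
by have [_ | _] := eqVneq (j : nat) n; rewrite /= -natr1; wheel_field.
Qed.

Lemma mul_wheel_ginv_laplacian : wheel_ginv *m L = centering R n.+1.
Proof.
rewrite -trmx_wheel_ginv -[L]trmx_laplacian -?trmx_mul ?mul_laplacian_wheel_ginv.
- exact: trmx_centering.
- exact: wheel_cond_sym.
Qed.

Lemma wheel_ginv_group_inverse : is_group_inverse L wheel_ginv.
Proof.
split; last by rewrite mul_laplacian_wheel_ginv mul_wheel_ginv_laplacian.
- rewrite mul_laplacian_wheel_ginv centering_mulmx // => j.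
  by apply: sum_col_laplacian; [exact: wheel_cond_diag | exact: wheel_cond_sym].
- by rewrite mul_wheel_ginv_laplacian centering_mulmx //; exact: sum_col_wheel_ginv.
Qed.

Lemma trace_wheel_ginv :
  \tr wheel_ginv = n%:R * (g 0 - ((a * N)^-1 + (a * N ^+ 2)^-1)) + n%:R / (a * N ^+ 2).
Proof.
rewrite /mxtrace big_ord_recr /= mxE eqxx.
rewrite (eq_bigr (fun=> g 0 - ((a * N)^-1 + (a * N ^+ 2)^-1))) => [|i _].
  by rewrite sumr_const card_ord -[_ *+ n]mulr_natl.
by rewrite mxE /= (ltn_eqF (ltn_ord i)) cyc_distnn.
Qed.

Lemma sum_row_wheel_ginv i : \sum_j wheel_ginv i j = 0.
Proof.
under eq_bigr do rewrite -[wheel_ginv]trmx_wheel_ginv mxE.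
exact: sum_col_wheel_ginv.
Qed.

End WheelGroupInverse.

Theorem corollary3p2 (R : realFieldType) (n : nat) (a c : R) :
  (3 <= n)%N -> 0 < a -> 0 < c ->
  let L := laplacian (wheel_cond a c) in
  let q := a / (2 * c) + 1 in
  (exists G : 'M[R]_n.+1, is_group_inverse L G) /\
  (forall G : 'M[R]_n.+1, is_group_inverse L G ->
     kirchhoff G =
       - (2 * c)^-1 * ((n%:R + 1) / (chebT n q - 1)) *
         ((a * n%:R / (6 * c) - n%:R + 1) * chebU n.-1 q
          + (2 * c / a + n%:R / 3) * (chebV n.-1 q - 1))
       + a^-1 + n%:R * (n%:R + 1) / (6 * c)).
Proof.
move=> n_ge3 a_gt0 c_gt0 L q; have ginvH := wheel_ginv_group_inverse n_ge3 a_gt0 c_gt0.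
split=> [|G [LGL GLG LG_GL]]; first by exists (wheel_ginv n a c).
have -> : G = wheel_ginv n a c.
  case: ginvH; rewrite !mulmxE in LGL GLG LG_GL * => LHL HLH LH_HL.
  exact: group_inverse_uniq LGL GLG LG_GL LHL HLH LH_HL.
rewrite kirchhoff_trace => [|i]; last exact: sum_row_wheel_ginv.
rewrite trace_wheel_ginv /cycle_green -/q subn0.
have chebW_pred : chebW q n.-1 = q * chebW q n - chebT n q.
  by rewrite -{2 3}(ltn_predK n_ge3) chebT_W; ring.
have T_gt1 := chebT_wheel_gt1 n_ge3 a_gt0 c_gt0.
have W0 : chebW q 0 = 0 by [].
rewrite chebU_W chebV_W (ltn_predK n_ge3) chebW_pred W0 /q.
by field; rewrite subr_eq0 (gt_eqF T_gt1) nat1r pnatr_eq0 !lt0r_neq0.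
Qed.
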